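(* Let $L\subseteq B_i$ be an SINR-feasible set of links in a bucket $B_i$, let $e\in B_i$, and let $L^\ell=\{e'\in L:d_{e'}\le d_{e'e}\}$. Then $\sum_{e'\in L^\ell}\bar a_{e'}(e)\le C$ for a constant $C$ depending only on $\alpha$ and $\varepsilon$.
   Context: Constants: $\alpha\ge0$, $N>0$, $\beta>0$. Nodes lie in the Euclidean plane. A link is $e=(s_e,r_e,P_e)$; $\mathcal{L}$ is the set of links. $d_e=d(s_e,r_e)$, $d_{e'e}=d(s_{e'},r_e)$, $S_e=P_e/d_e^\alpha$, $S_{e'e}=P_{e'}/d_{e'e}^\alpha$, $\gamma_e=\beta S_e/(S_e-\beta N)$, $\hat a_{e'}(e)=S_{e'e}/S_e$, $a_{e'}(e)=\gamma_e\hat a_{e'}(e)$, $\bar a_{e'}(e)=\min\{1,a_{e'}(e)\}$. $L$ is SINR-feasible if $S_e/(N+\sum_{e'\in L\setminus\{e\}}S_{e'e})\ge\beta$ for all $e\in L$. Buckets: $S_{\min}=\min_{e\in\mathcal{L}}S_e$, $B_i=\{e\in\mathcal{L}:2^iS_{\min}\le S_e<2^{i+1}S_{\min}\}$. Standing assumption: there is a constant $\varepsilon>0$ with $S_e/N\ge(1+\varepsilon)\beta$ for all $e\in\mathcal{L}$. *)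

From Stdlib Require Import Reals Lra List.
Import ListNotations.
Open Scope R_scope.

Definition point := (R * R)%type.

Definition dist (p q : point) : R :=
  sqrt ((fst p - fst q) ^ 2 + (snd p - snd q) ^ 2).

Record link := mkLink { sdr : point; rcv : point; pw : R }.

Definition link_eq_dec (x y : link) : {x = y} + {x <> y}.
Proof.
  destruct x as [[a b] [c d] p], y as [[a' b'] [c' d'] p'].
  destruct (Req_EM_T a a'); [|right; congruence].
  destruct (Req_EM_T b b'); [|right; congruence].
  destruct (Req_EM_T c c'); [|right; congruence].
  destruct (Req_EM_T d d'); [|right; congruence].
  destruct (Req_EM_T p p'); [|right; congruence].
  left; subst; reflexivity.
Defined.

Definition d_len (e : link) : R := dist (sdr e) (rcv e).
Definition d_cross (e' e : link) : R := dist (sdr e') (rcv e).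

Definition S (alpha : R) (e : link) : R := pw e / Rpower (d_len e) alpha.
Definition Sx (alpha : R) (e' e : link) : R := pw e' / Rpower (d_cross e' e) alpha.

Definition gamma (alpha N beta : R) (e : link) : R :=
  beta * S alpha e / (S alpha e - beta * N).
Definition ahat (alpha : R) (e' e : link) : R := Sx alpha e' e / S alpha e.
Definition a_aff (alpha N beta : R) (e' e : link) : R :=
  gamma alpha N beta e * ahat alpha e' e.
Definition abar (alpha N beta : R) (e' e : link) : R :=
  Rmin 1 (a_aff alpha N beta e' e).

Definition sumR {A} (f : A -> R) (l : list A) : R :=
  fold_right (fun x acc => f x + acc) 0 l.

(* A sender located
   exactly at another link's receiver produces infinite interference, so such
   sets are infeasible; this is made explicit by the positivity clause. *)
Definition sinr_feasible (alpha N beta : R) (L : list link) : Prop :=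
  forall e, In e L ->
    (forall e', In e' L -> e' <> e -> 0 < d_cross e' e) /\
    S alpha e / (N + sumR (fun e' => Sx alpha e' e) (remove link_eq_dec e L)) >= beta.

Definition Smin (alpha : R) (Lall : list link) : R :=
  match Lall with
  | [] => 0
  | h :: t => fold_right Rmin (S alpha h) (map (S alpha) t)
  end.

Definition in_bucket (alpha : R) (Lall : list link) (i : nat) (e : link) : Prop :=
  In e Lall /\
  2 ^ i * Smin alpha Lall <= S alpha e < 2 ^ (Datatypes.S i) * Smin alpha Lall.

Definition L_ell (e : link) (L : list link) : list link :=
  filter (fun e' => if Rle_dec (d_len e') (d_cross e' e) then true else false) L.

(* Let e2 be the link of L^ell whose sender is nearest to r_e.  For any other y in L^ell,
   d(s_y, r_e2) <= d(s_y, r_e) + d(r_e, s_e2) + d_e2 <= 3 d(s_y, r_e), since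
   d_e2 <= d(s_e2, r_e) <= d(s_y, r_e); hence S_{ye} <= 3^alpha S_{y e2}.  As e and e2 lie
   in the same bucket, S_e2 <= 2 S_e, and the standing assumption gives
   gamma_e <= beta (1 + eps) / eps.  So abar_y(e) <= K beta S_{y e2} / S_e2 with
   K = 2 3^alpha (1 + eps) / eps, and the SINR-feasibility of e2 bounds the sum of these
   terms by K; the single term abar_e2(e) is at most 1. *)
From Pilot Require Import Defs.
From Stdlib Require Import Reals List Lra Psatz.
Open Scope R_scope.

Section Sums.
Context {A : Type}.
Implicit Types (f g : A -> R) (l : list A).

Lemma sumR_nonneg f l : (forall x, In x l -> 0 <= f x) -> 0 <= sumR f l.
Proof.
  induction l as [|a l IH]; simpl; intros Hf; [lra|].
  pose proof (Hf a (or_introl eq_refl)).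
  enough (0 <= sumR f l) by lra.
  apply IH; auto.
Qed.

Lemma sumR_scal_l c f l : sumR (fun x => c * f x) l = c * sumR f l.
Proof. induction l as [|a l IH]; simpl; [|rewrite IH]; ring. Qed.

Lemma sumR_filter_le f g (p : A -> bool) l :
  (forall x, In x l -> p x = true -> f x <= g x) ->
  (forall x, In x l -> 0 <= g x) ->
  sumR f (filter p l) <= sumR g l.
Proof.
  induction l as [|a l IH]; simpl; intros Hfg Hg; [lra|].
  assert (IHl : sumR f (filter p l) <= sumR g l) by (apply IH; auto).
  pose proof (Hg a (or_introl eq_refl)).
  destruct (p a) eqn:Hpa; simpl; [|lra].
  pose proof (Hfg a (or_introl eq_refl) Hpa). lra.
Qed.

Lemma sumR_le_remove (dec : forall x y : A, {x = y} + {x <> y}) f a l :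
  NoDup l -> 0 <= f a -> sumR f l <= f a + sumR f (remove dec a l).
Proof.
  induction l as [|b l IH]; simpl; intros Hl Ha; [lra|].
  inversion Hl as [|? ? Hb Hl']; subst.
  destruct (dec a b) as [<-|Hab]; simpl.
  - rewrite notin_remove by assumption. lra.
  - specialize (IH Hl' Ha). lra.
Qed.

Lemma remove_filter (dec : forall x y : A, {x = y} + {x <> y}) (p : A -> bool) a l :
  remove dec a (filter p l) = filter p (remove dec a l).
Proof.
  induction l as [|b l IH]; simpl; [reflexivity|].
  destruct (p b) eqn:Hpb; simpl; destruct (dec a b); simpl; rewrite ?Hpb; congruence.
Qed.

Lemma exists_argmin (h : A -> R) l :
  l <> nil -> exists m, In m l /\ forall y, In y l -> h m <= h y.
Proof.
  induction l as [|a l IH]; intros Hne; [congruence|].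
  destruct l as [|b l].
  - exists a; split; [now left|]. intros y [<-|[]]; lra.
  - destruct IH as [m [Hm Hmin]]; [discriminate|].
    destruct (Rle_dec (h a) (h m)).
    + exists a; split; [now left|]. intros y [<-|Hy]; [lra|].
      specialize (Hmin y Hy); lra.
    + exists m; split; [now right|]. intros y [<-|Hy]; [lra|auto].
Qed.

End Sums.

Lemma dist_sym p q : Defs.dist p q = Defs.dist q p.
Proof. unfold Defs.dist. f_equal. ring. Qed.

Lemma dist_triangle p q r : Defs.dist p r <= Defs.dist p q + Defs.dist q r.
Proof.
  unfold Defs.dist.
  set (a := fst p - fst q); set (b := snd p - snd q).
  set (c := fst q - fst r); set (d := snd q - snd r).
  replace (fst p - fst r) with (a + c) by (unfold a, c; ring).
  replace (snd p - snd r) with (b + d) by (unfold b, d; ring).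
  assert (Hcs : a * c + b * d <= sqrt (a ^ 2 + b ^ 2) * sqrt (c ^ 2 + d ^ 2)).
  { rewrite <- sqrt_mult by nra.
    apply Rle_trans with (Rabs (a * c + b * d)); [apply Rle_abs|].
    rewrite <- sqrt_Rsqr_abs. apply sqrt_le_1_alt. unfold Rsqr. pose proof (pow2_ge_0 (a * d - b * c)). nra. }
  pose proof (sqrt_pos (a ^ 2 + b ^ 2)). pose proof (sqrt_pos (c ^ 2 + d ^ 2)).
  pose proof (sqrt_sqrt (a ^ 2 + b ^ 2)). pose proof (sqrt_sqrt (c ^ 2 + d ^ 2)).
  rewrite <- (sqrt_square (sqrt (a ^ 2 + b ^ 2) + sqrt (c ^ 2 + d ^ 2))) by lra.
  apply sqrt_le_1_alt. nra.
Qed.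

Lemma d_cross_le_detour y e e2 :
  d_cross y e2 <= d_cross y e + d_cross e2 e + d_len e2.
Proof.
  unfold d_cross, d_len.
  pose proof (dist_triangle (sdr y) (rcv e) (rcv e2)).
  pose proof (dist_triangle (rcv e) (sdr e2) (rcv e2)).
  rewrite (dist_sym (rcv e) (sdr e2)) in *. lra.
Qed.

Lemma Rpower_pos x a : 0 < Rpower x a.
Proof. apply exp_pos. Qed.

Lemma Rdiv_le_compat a b c d : 0 <= a -> a <= b -> 0 < d -> d <= c -> a / c <= b / d.
Proof.
  intros. apply Rmult_le_compat; [lra|left; apply Rinv_0_lt_compat; lra|lra|].
  apply Rinv_le_contravar; lra.
Qed.

Lemma div_Rpower_le alpha c p d d' :
  0 <= alpha -> 0 <= p -> 0 < c -> 0 < d' -> d' <= c * d ->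
  p / Rpower d alpha <= Rpower c alpha * (p / Rpower d' alpha).
Proof.
  intros Ha Hp Hc Hd' Hle.
  assert (Hd : 0 < d) by nra.
  pose proof (Rpower_pos c alpha). pose proof (Rpower_pos d alpha).
  replace (p / Rpower d alpha) with (Rpower c alpha * (p / (Rpower c alpha * Rpower d alpha)))
    by (field; lra).
  apply Rmult_le_compat_l; [lra|]. apply Rdiv_le_compat; try lra; [apply Rpower_pos|].
  rewrite Rpower_mult_distr by lra. apply Rle_Rpower_l; lra.
Qed.

Lemma Sx_nonneg alpha y e : 0 <= pw y -> 0 <= Sx alpha y e.
Proof. intros. apply Rmult_le_pos; [lra|left; apply Rinv_0_lt_compat, Rpower_pos]. Qed.

Lemma gamma_le alpha N beta eps e :
  0 < eps -> 0 < beta -> 0 < N -> S alpha e / N >= (1 + eps) * beta ->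
  0 <= gamma alpha N beta e <= beta * (1 + eps) / eps.
Proof.
  unfold gamma. set (s := S alpha e). intros Heps Hb HN HsN.
  assert (Hs : (1 + eps) * beta * N <= s).
  { replace s with (s / N * N) by (field; lra).
    apply Rmult_le_compat_r; lra. }
  assert (0 < eps * beta * N) by (repeat apply Rmult_lt_0_compat; lra).
  assert (Hx : 0 < s - beta * N) by lra.
  split; [left; apply Rdiv_lt_0_compat; nra|].
  replace (beta * s / (s - beta * N)) with
    (beta * (1 + eps) / eps - beta * (s - (1 + eps) * beta * N) / (eps * (s - beta * N)))
    by (field; lra).
  enough (0 <= beta * (s - (1 + eps) * beta * N) / (eps * (s - beta * N))) by lra.
  apply Rmult_le_pos; [nra|left; apply Rinv_0_lt_compat; nra].
Qed.

Lemma in_bucket_S_le_double alpha Lall i x y :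
  in_bucket alpha Lall i x -> in_bucket alpha Lall i y -> S alpha x <= 2 * S alpha y.
Proof. intros [_ [_ Hx]] [_ [Hy _]]. simpl in Hx. lra. Qed.

Lemma In_L_ell e L y : In y (L_ell e L) <-> In y L /\ d_len y <= d_cross y e.
Proof.
  unfold L_ell. rewrite filter_In.
  destruct (Rle_dec (d_len y) (d_cross y e)); intuition congruence.
Qed.

Lemma sinr_feasible_interference_le alpha N beta L e :
  0 < N -> 0 <= beta -> (forall y, In y L -> 0 <= pw y) ->
  sinr_feasible alpha N beta L -> In e L ->
  beta * sumR (fun y => Sx alpha y e) (remove link_eq_dec e L) <= S alpha e.
Proof.
  intros HN Hb Hpw Hfeas HeL.
  destruct (Hfeas e HeL) as [_ Hsinr].
  set (I := sumR _ _) in *.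
  assert (HI : 0 <= I).
  { apply sumR_nonneg. intros y Hy. apply in_remove in Hy as [Hy _].
    apply Sx_nonneg, Hpw, Hy. }
  replace (S alpha e) with (S alpha e / (N + I) * (N + I)) by (field; lra).
  assert (beta * (N + I) <= S alpha e / (N + I) * (N + I))
    by (apply Rmult_le_compat_r; lra).
  nra.
Qed.

Section Nearest_interferer.

Variables (alpha eps N beta : R) (Lall L : list link) (i : nat) (e : link).
Hypotheses (Halpha : 0 <= alpha) (Heps : 0 < eps) (HN : 0 < N) (Hbeta : 0 < beta).
Hypothesis Hlinks : forall e0, In e0 Lall ->
  0 < d_len e0 /\ 0 < pw e0 /\ S alpha e0 / N >= (1 + eps) * beta.
Hypothesis HL : forall e', In e' L -> in_bucket alpha Lall i e'.
Hypothesis Hfeas : sinr_feasible alpha N beta L.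
Hypothesis He : in_bucket alpha Lall i e.

Let K := 2 * Rpower 3 alpha * (1 + eps) / eps.

Lemma K_nonneg : 0 <= K.
Proof.
  unfold K. pose proof (Rpower_pos 3 alpha).
  apply Rmult_le_pos, Rlt_le, Rinv_0_lt_compat; nra.
Qed.

Lemma S_pos y : In y Lall -> 0 < S alpha y.
Proof. intros Hy. apply Rdiv_lt_0_compat; [apply Hlinks, Hy|apply Rpower_pos]. Qed.

Lemma abar_nonneg y : In y Lall -> 0 <= abar alpha N beta y e.
Proof.
  intros Hy. assert (HeLall : In e Lall) by apply He.
  destruct (gamma_le alpha N beta eps e Heps Hbeta HN) as [Hg0 _]; [apply Hlinks, HeLall|].
  apply Rmin_glb; [lra|]. apply Rmult_le_pos; [assumption|].
  apply Rmult_le_pos, Rlt_le, Rinv_0_lt_compat, S_pos, HeLall.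
  apply Sx_nonneg, Rlt_le, Hlinks, Hy.
Qed.

Lemma abar_le_interference e2 y :
  In e2 (L_ell e L) -> In y (L_ell e L) -> y <> e2 -> d_cross e2 e <= d_cross y e ->
  abar alpha N beta y e <= K * beta / S alpha e2 * Sx alpha y e2.
Proof.
  intros He2 Hy Hne Hnear.
  apply In_L_ell in He2 as [He2L Hd2]. apply In_L_ell in Hy as [HyL Hdy].
  assert (HeLall : In e Lall) by apply He.
  assert (He2Lall : In e2 Lall) by apply (HL e2 He2L).
  destruct (Hlinks y (proj1 (HL y HyL))) as [Hdy0 [Hpwy _]].
  pose proof (S_pos e HeLall). pose proof (S_pos e2 He2Lall).
  assert (Hdye2 : 0 < d_cross y e2) by (apply (Hfeas e2 He2L); assumption).
  assert (Hdetour : d_cross y e2 <= 3 * d_cross y e)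
    by (pose proof (d_cross_le_detour y e e2); lra).
  assert (HSx : Sx alpha y e <= Rpower 3 alpha * Sx alpha y e2)
    by (apply div_Rpower_le; lra).
  assert (Hahat : ahat alpha y e <= 2 * Rpower 3 alpha * Sx alpha y e2 / S alpha e2).
  { unfold ahat. replace (Sx alpha y e / S alpha e) with (2 * Sx alpha y e / (2 * S alpha e))
      by (field; lra).
    apply Rdiv_le_compat; try lra; [apply Rmult_le_pos, Sx_nonneg; lra|].
    apply (in_bucket_S_le_double _ _ _ _ _ (HL e2 He2L) He). }
  destruct (gamma_le alpha N beta eps e Heps Hbeta HN) as [Hg0 Hg1]; [apply Hlinks, HeLall|].
  apply Rle_trans with (a_aff alpha N beta y e); [apply Rmin_r|].
  apply Rle_trans with
    (beta * (1 + eps) / eps * (2 * Rpower 3 alpha * Sx alpha y e2 / S alpha e2)).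
  - apply Rmult_le_compat; try lra.
    apply Rmult_le_pos, Rlt_le, Rinv_0_lt_compat; [apply Sx_nonneg; lra|assumption].
  - unfold K. apply Req_le. field. lra.
Qed.

Lemma scaled_interference_le e2 :
  In e2 L -> K * beta / S alpha e2 * sumR (fun y => Sx alpha y e2) (remove link_eq_dec e2 L) <= K.
Proof.
  intros He2L.
  assert (Hpw : forall y, In y L -> 0 <= pw y) by (intros y Hy; apply Rlt_le, Hlinks, HL, Hy).
  pose proof (S_pos e2 (proj1 (HL e2 He2L))).
  pose proof (sinr_feasible_interference_le alpha N beta L e2 HN (Rlt_le _ _ Hbeta) Hpw Hfeas He2L).
  set (I := sumR _ _) in *.
  replace (K * beta / S alpha e2 * I) with (K / S alpha e2 * (beta * I)) by (field; lra).
  replace K with (K / S alpha e2 * S alpha e2) at 2 by (field; lra).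
  apply Rmult_le_compat_l; [|assumption].
  apply Rmult_le_pos, Rlt_le, Rinv_0_lt_compat; [apply K_nonneg|assumption].
Qed.

Hypothesis Hnodup : NoDup L.

Lemma sum_abar_L_ell_le : sumR (fun e' => abar alpha N beta e' e) (L_ell e L) <= 1 + K.
Proof.
  destruct (L_ell e L) as [|y0 l0] eqn:HLe.
  { simpl. pose proof K_nonneg. lra. }
  destruct (exists_argmin (fun y => d_cross y e) (y0 :: l0)) as [e2 [He2 Hnearest]];
    [discriminate|].
  rewrite <- HLe in He2, Hnearest |- *.
  assert (He2L : In e2 L) by apply (In_L_ell e L e2), He2.
  assert (He2Lall : In e2 Lall) by apply (HL e2 He2L).
  set (c := K * beta / S alpha e2).
  assert (Hc : 0 <= c).
  { pose proof K_nonneg. pose proof (S_pos e2 He2Lall).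
    apply Rmult_le_pos; [nra|]. apply Rlt_le, Rinv_0_lt_compat; assumption. }
  apply Rle_trans with
    (abar alpha N beta e2 e + sumR (fun y => c * Sx alpha y e2) (remove link_eq_dec e2 L)).
  - eapply Rle_trans.
    { apply (sumR_le_remove link_eq_dec); [apply NoDup_filter, Hnodup|apply abar_nonneg, He2Lall]. }
    apply Rplus_le_compat_l. unfold L_ell. rewrite remove_filter. apply sumR_filter_le.
    + intros y Hy Hp. apply in_remove in Hy as [HyL Hne].
      assert (HyLe : In y (L_ell e L)) by (apply filter_In; split; assumption).
      apply abar_le_interference; auto.
    + intros y Hy. apply in_remove in Hy as [Hy _].
      apply Rmult_le_pos; [exact Hc|apply Sx_nonneg, Rlt_le, Hlinks, HL, Hy].
  - rewrite sumR_scal_l.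
    pose proof (scaled_interference_le e2 He2L).
    assert (abar alpha N beta e2 e <= 1) by apply Rmin_l.
    unfold c in *. lra.
Qed.

End Nearest_interferer.

Theorem lemma3 :
  forall alpha eps : R, 0 <= alpha -> 0 < eps ->
  exists C : R,
  forall (N beta : R) (Lall : list link) (i : nat) (L : list link) (e : link),
    0 < N -> 0 < beta ->
    (forall e0, In e0 Lall ->
       0 < d_len e0 /\ 0 < pw e0 /\ S alpha e0 / N >= (1 + eps) * beta) ->
    NoDup L ->
    (forall e', In e' L -> in_bucket alpha Lall i e') ->
    sinr_feasible alpha N beta L ->
    in_bucket alpha Lall i e ->
    sumR (fun e' => abar alpha N beta e' e) (L_ell e L) <= C.
Proof.
  intros alpha eps Halpha Heps.
  exists (1 + 2 * Rpower 3 alpha * (1 + eps) / eps).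
  intros N beta Lall i L e HN Hbeta Hlinks Hnodup HL Hfeas He.
  eapply sum_abar_L_ell_le; eassumption.
Qed.
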